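(* Let $A\in\mathbb{R}^{n\times n}$ and $C\in\mathbb{R}^{m\times n}$. Define subspaces of $\mathbb{R}^n$ by $S_0:=\mathcal{N}(C)$ (the null space of $C$) and $S_k:=AS_{k-1}\cap S_0$ for $k=1,2,\ldots$, where $AS:=\{As: s\in S\}$. Then the linear system $x^+=Ax$, $y=Cx$ (with state space $\mathbb{R}^n$ and output space $\mathbb{R}^m$) is deadbeat observable if and only if $S_n=\{0\}$.
   Context: Consider a discrete-time system $x^+=f(x)$, $y=h(x)$ with $x\in\mathcal{X}\subset\mathbb{R}^n$, $y\in\mathcal{Y}\subset\mathbb{R}^m$; its solution from $x$ is $\phi(k,x)$, with $\phi(0,x)=x$, $\phi(k+1,x)=f(\phi(k,x))$. Given a set-valued map $g:\mathcal{X}\times\mathcal{Y}\rightrightarrows\mathcal{X}$, consider the cascade $x^+=f(x)$, $\hat x^+\in g(\hat x,h(x))$; a solution of the second component is any sequence $\psi(k,\hat x,x)$ with $\psi(0,\hat x,x)=\hat x$ and $\psi(k+1,\hat x,x)\in g(\psi(k,\hat x,x),h(\phi(k,x)))$ for all $k$. The system $\hat x^+\in g(\hat x,y)$ is a deadbeat observer for $x^+=f(x),\,y=h(x)$ if there exists an integer $p\ge1$ such that all such solutions satisfy $\psi(k,\hat x,x)=\phi(k,x)$ for all $x,\hat x\in\mathcal{X}$ and all $k\ge p$. The system is deadbeat observable if a deadbeat observer for it exists. *)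

From HB Require Import structures.
From mathcomp Require Import all_boot all_order all_algebra.
Set Implicit Arguments. Unset Strict Implicit. Unset Printing Implicit Defensive.
Import Order.TTheory GRing.Theory Num.Theory.
Local Open Scope ring_scope.

Fixpoint sol (X : Type) (f : X -> X) (k : nat) (x : X) : X :=
  match k with
  | O => x
  | S k' => f (sol f k' x)
  end.

(* A set-valued map g : X x Y => X is represented as X -> Y -> (X -> Prop);
   g xh y z means z \in g(xh, y).
   psi is a solution of xh^+ \in g(xh, h x) driven by x, from xh. *)
Definition is_obs_solution (X Y : Type) (f : X -> X) (h : X -> Y)
  (g : X -> Y -> X -> Prop) (xh x : X) (psi : nat -> X) : Prop :=
  psi 0%N = xh /\ forall k : nat, g (psi k) (h (sol f k x)) (psi k.+1).

Definition deadbeat_observer (X Y : Type) (f : X -> X) (h : X -> Y)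
  (g : X -> Y -> X -> Prop) : Prop :=
  exists p : nat, (1 <= p)%N /\
    forall (x xh : X) (psi : nat -> X), is_obs_solution f h g xh x psi ->
      forall k : nat, (p <= k)%N -> psi k = sol f k x.

(* Set-valued maps are required to have nonempty values. *)
Definition deadbeat_observable (X Y : Type) (f : X -> X) (h : X -> Y) : Prop :=
  exists g : X -> Y -> X -> Prop,
    (forall (xh : X) (y : Y), exists z, g xh y z) /\ deadbeat_observer f h g.

Fixpoint Sk (R : realFieldType) (n m : nat) (A : 'M[R]_n) (C : 'M[R]_(m, n))
  (k : nat) : 'cV[R]_n -> Prop :=
  match k with
  | O => fun x => C *m x = 0
  | S k' => fun x => (exists s, Sk A C k' s /\ x = A *m s) /\ C *m x = 0
  end.

From mathcomp Require Import all_boot all_algebra.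
From Stdlib Require Import Classical ClassicalEpsilon.
Import GRing.Theory.
Local Open Scope ring_scope.
Set Implicit Arguments.
Unset Strict Implicit.

(* S_k consists of the states A^k s reached along trajectories whose first k + 1 outputs
   vanish, and the decreasing chain S_k of subspaces of R^n is constant from k = n on.
   If an observer with horizon p exists, a trajectory ending at x in S_n = S_(n+p) with
   zero outputs cannot be told apart from the zero trajectory, so x = 0. Conversely, if
   S_n = 0, the observer that applies an output-consistent correction lying in the
   deepest possible space A S_(j-1) keeps the error at time k in A S_(k-1), which is 0
   for k > n. *)

Fixpoint obs_run (X Y : Type) (sel : X -> Y -> X) (xh : X) (u : nat -> Y) (k : nat) : X :=
  if k is k'.+1 then sel (obs_run sel xh u k') (u k') else xh.

Lemma obs_run_ext (X Y : Type) (sel : X -> Y -> X) (xh : X) (u u' : nat -> Y) k :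
  (forall j, (j < k)%N -> u j = u' j) -> obs_run sel xh u k = obs_run sel xh u' k.
Proof.
elim: k => [|k IHk] //= eq_u; rewrite IHk ?eq_u // => j lt_jk.
by rewrite eq_u // ltnW.
Qed.

(* Run a selection of the observer from a common initial estimate along both
   trajectories: the two runs agree as long as the outputs do. *)
Lemma deadbeat_observable_outputs (X Y : Type) (f : X -> X) (h : X -> Y) :
  deadbeat_observable f h ->
  exists p, forall x x' k, (p <= k)%N ->
    (forall j, (j < k)%N -> h (sol f j x) = h (sol f j x')) -> sol f k x = sol f k x'.
Proof.
case=> g [g_total [p [_ dbo]]]; exists p => x x' k le_pk eq_out.
pose sel xh y := proj1_sig (constructive_indefinite_description _ (g_total xh y)).
have sel_g xh y : g xh y (sel xh y).
  by rewrite /sel; case: constructive_indefinite_description.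
have run_sol x'' : is_obs_solution f h g x x'' (obs_run sel x (fun j => h (sol f j x''))).
  by split=> // j; apply: sel_g.
rewrite -(dbo _ _ _ (run_sol x) k le_pk) -(dbo _ _ _ (run_sol x') k le_pk).
exact: obs_run_ext.
Qed.

Section DecreasingChain.

Variables (K : fieldType) (vT : vectType K).
Variables (F : {vspace vT} -> {vspace vT}) (V : nat -> {vspace vT}).
Hypothesis VS : forall k, V k.+1 = F (V k).
Hypothesis V_decr : forall k, (V k.+1 <= V k)%VS.

Lemma chain_const_from k j : V k.+1 = V k -> V (k + j) = V k.
Proof.
move=> Vk; elim: j => [|j IHj]; first by rewrite addn0.
by rewrite addnS VS IHj -VS.
Qed.

Lemma chain_dim_or_const k : (\dim (V k) + k <= \dim (V 0))%N \/ V k.+1 = V k.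
Proof.
elim: k => [|k [IHk|IHk]]; first by left; rewrite addn0.
- have [Vk1|Vk1] := eqVneq (V k.+1) (V k); first by right; rewrite VS Vk1 -VS.
  left; have lt_dim : (\dim (V k.+1) < \dim (V k))%N.
    by rewrite ltnNge; apply: contra Vk1 => le_dim; rewrite eqEdim V_decr.
  by apply: leq_trans IHk; rewrite addnS ltn_add2r.
- by right; rewrite VS IHk -VS.
Qed.

Lemma chain_stable k : (\dim (V 0) <= k)%N -> V k = V (\dim (V 0)).
Proof.
set d := \dim (V 0) => le_dk; rewrite -(subnKC le_dk); apply: chain_const_from.
have [le_d|//] := chain_dim_or_const d.
have /eqP Vd0 : V d == 0%VS by rewrite -dimv_eq0 -leqn0 -(leq_add2r d).
by apply/eqP; rewrite Vd0 -subv0 -Vd0.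
Qed.

End DecreasingChain.

Section UnobservableSpaces.

Variables (R : fieldType) (n m : nat) (A : 'M[R]_n) (C : 'M[R]_(m, n)).

Local Notation fA := (linfun (mulmx A)).
Local Notation fC := (linfun (mulmx C)).
Local Notation kerC := (lker fC).

(* [ASspace k] is the space A S_(k-1) of the paper, with [ASspace 0] the whole space,
   so that S_k is [ASspace k :&: kerC] for every k. *)
Fixpoint ASspace (k : nat) : {vspace 'cV[R]_n} :=
  if k is k'.+1 then (fA @: (ASspace k' :&: kerC))%VS else fullv.

Lemma fAE (v : 'cV[R]_n) : fA v = A *m v. Proof. exact: lfunE. Qed.
Lemma fCE (v : 'cV[R]_n) : fC v = C *m v. Proof. exact: lfunE. Qed.

Definition Sspace (k : nat) : {vspace 'cV[R]_n} := (ASspace k :&: kerC)%VS.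

Lemma ASspace_decr k : (ASspace k.+1 <= ASspace k)%VS.
Proof.
elim: k => [|k IHk]; first exact: subvf.
by apply: limgS; apply: capvS.
Qed.

Lemma ASspace_sub i j : (i <= j)%N -> (ASspace j <= ASspace i)%VS.
Proof.
move=> /subnK <-; elim: (j - i)%N => [|k IHk]; first exact: subvv.
exact: subv_trans (ASspace_decr _) IHk.
Qed.

Lemma Sspace_stable k : (n <= k)%N -> Sspace k = Sspace n.
Proof.
have Sdecr j : (Sspace j.+1 <= Sspace j)%VS by apply: capvS (ASspace_decr j) _.
have le_dim : (\dim (Sspace 0) <= n)%N.
  by apply: leq_trans (dimvS (subvf _)) _; rewrite dimvf dim_matrix mulr1.
have stable := chain_stable (F := fun S => (fA @: S :&: kerC)%VS) (V := Sspace)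
  (fun _ => erefl) Sdecr.
by move=> le_nk; rewrite (stable k) ?(stable n) // (leq_trans le_dim).
Qed.

Local Notation traj k x := (sol (fun v : 'cV[R]_n => A *m v) k x).

Lemma traj0 k : traj k 0 = 0.
Proof. by elim: k => [|k /= ->]; rewrite ?mulmx0. Qed.

Lemma Sspace_traj k x :
  x \in Sspace k -> exists2 s, x = traj k s & forall j, (j <= k)%N -> C *m traj j s = 0.
Proof.
elim: k x => [|k IHk] x; rewrite /Sspace memv_cap memv_ker fCE => /andP[xk /eqP Cx].
  by exists x => // j; rewrite leqn0 => /eqP ->.
have [u uk xE] := memv_imgP xk; have [s uE Cs] := IHk u uk.
rewrite xE fAE uE in Cx *; exists s => // j.
by rewrite leq_eqVlt => /predU1P[-> | ]; last exact: Cs.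
Qed.

Lemma ASspace_eq0 k : Sspace n = 0%VS -> (n < k)%N -> ASspace k = 0%VS.
Proof.
move=> Sn0 lt_nk; apply/eqP; rewrite -subv0.
by apply: subv_trans (ASspace_sub lt_nk) _; rewrite /= -/(Sspace n) Sn0 limg0.
Qed.

(* The observer replaces [xh] by an output-consistent [w] whose correction [w - xh]
   lies in [ASspace j] for every level [j <= n] able to explain the output mismatch,
   so that the estimation error moves one step down the chain at each time. *)
Definition correctable (xh : 'cV[R]_n) (y : 'cV[R]_m) (j : nat) :=
  (y - C *m xh) \in (fC @: ASspace j)%VS.

Definition obs_correction (xh : 'cV[R]_n) (y : 'cV[R]_m) (w : 'cV[R]_n) :=
  C *m w = y /\ forall j, (j <= n)%N -> correctable xh y j -> w - xh \in ASspace j.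

Definition observer (xh : 'cV[R]_n) (y : 'cV[R]_m) (z : 'cV[R]_n) :=
  (exists w, obs_correction xh y w) -> exists2 w, obs_correction xh y w & z = A *m w.

Lemma obs_correction_exists xh y j :
  (j <= n)%N -> correctable xh y j -> exists w, obs_correction xh y w.
Proof.
move=> le_jn cj; pose P i := (i <= n)%N && correctable xh y i.
have exP : exists i, P i by exists j; rewrite /P le_jn.
have ubP i : P i -> (i <= n)%N by case/andP.
case: (ex_maxnP exP ubP) => J /andP[_ /memv_imgP[t tJ]]; rewrite fCE => Ct maxJ.
exists (xh + t); split; first by rewrite mulmxDr -Ct addrC subrK.
move=> i le_in ci; rewrite addrC addKr.
by apply: subvP (ASspace_sub (maxJ i _)) _ tJ; rewrite /P le_in.
Qed.

Lemma observer_error_step xh phi z j :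
  (j <= n)%N -> xh - phi \in ASspace j -> observer xh (C *m phi) z ->
  z - A *m phi \in ASspace j.+1.
Proof.
move=> le_jn ej obs.
have cj : correctable xh (C *m phi) j.
  by apply/memv_imgP; exists (phi - xh); rewrite ?fCE ?mulmxBr // -opprB memvN.
have [w [Cw corr] ->] := obs (obs_correction_exists le_jn cj).
rewrite -mulmxBr -fAE; apply: memv_img.
rewrite memv_cap memv_ker fCE mulmxBr Cw subrr eqxx andbT.
by rewrite -(subrK xh w) -addrA memvD // corr.
Qed.

Lemma observer_error x xh psi :
  Sspace n = 0%VS ->
  is_obs_solution (fun v : 'cV[R]_n => A *m v) (fun v : 'cV[R]_n => C *m v)
    observer xh x psi ->
  forall k, psi k - traj k x \in ASspace k.
Proof.
move=> Sn0 [_ psiS]; elim=> [|k IHk]; first exact: memvf.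
have ek : psi k - traj k x \in ASspace (minn k n).
  exact: subvP (ASspace_sub (geq_minl k n)) _ IHk.
have sub : (ASspace (minn k n).+1 <= ASspace k.+1)%VS.
  case: leqP => _; first exact: subvv.
  by rewrite (ASspace_eq0 Sn0 (ltnSn n)) sub0v.
exact: subvP sub _ (observer_error_step (geq_minr k n) ek (psiS k)).
Qed.

End UnobservableSpaces.

Lemma Sk_Sspace (R : realFieldType) (n m : nat) (A : 'M[R]_n) (C : 'M[R]_(m, n)) k x :
  Sk A C k x <-> x \in Sspace A C k.
Proof.
elim: k x => [|k IHk] x; rewrite /Sspace memv_cap memv_ker fCE /=.
  by rewrite memvf; split=> /eqP.
split=> [[[s [Sks ->]] Cx] | /andP[/memv_imgP[s /IHk Sks ->] /eqP Cx]].
  by rewrite Cx eqxx andbT -fAE memv_img // -IHk.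
by rewrite fAE in Cx *; split=> //; exists s.
Qed.

Theorem lemma1 (R : realFieldType) (n m : nat) (A : 'M[R]_n) (C : 'M[R]_(m, n)) :
  deadbeat_observable (fun x : 'cV[R]_n => A *m x) (fun x : 'cV[R]_n => C *m x)
  <-> (forall x : 'cV[R]_n, Sk A C n x <-> x = 0).
Proof.
split=> [/deadbeat_observable_outputs[p same_out] x | S0].
  split=> [/Sk_Sspace | ->]; last by apply/Sk_Sspace; rewrite mem0v.
  rewrite -(Sspace_stable A C (leq_addr p n)) => /Sspace_traj[s -> out0].
  rewrite (same_out s 0 (n + p)%N (leq_addl _ _)) ?traj0 // => j lt_j.
  by rewrite traj0 mulmx0 out0 // ltnW.
have Sn0 : Sspace A C n = 0%VS.
  by apply/eqP; rewrite -subv0; apply/subvP => x /Sk_Sspace /S0 ->; rewrite mem0v.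
exists (observer A C); split.
  move=> xh y; have [[w cw] | no_w] := classic (exists w, obs_correction A C xh y w).
    by exists (A *m w) => _; exists w.
  by exists 0 => /no_w.
exists n.+1; split=> // x xh psi psi_sol k lt_nk; apply/eqP.
by rewrite -subr_eq0 -memv0 -(ASspace_eq0 Sn0 lt_nk) (observer_error Sn0 psi_sol).
Qed.
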